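(* If $\mathcal G$ is a core network with input nodes $\iota_1,\dots,\iota_n$ and output node $o$, then at most one input node of $\mathcal G$ is an absolutely super-simple node.
   Context: Node $b$ is downstream from $a$ (and $a$ upstream from $b$) if there is a directed path from $a$ to $b$. A core network: every node is upstream from $o$ and downstream from at least one input node. A simple path visits each node at most once; an $\iota_mo$-simple path is a simple path from $\iota_m$ to $o$. A node is absolutely super-simple if, for every $m=1,\dots,n$, it lies on every $\iota_mo$-simple path. *)

From mathcomp Require Import all_boot.
Set Implicit Arguments. Unset Strict Implicit. Unset Printing Implicit Defensive.

Section Network.
Variable V : finType.
Variable e : rel V.

Definition downstream (a b : V) : bool := connect e a b.

Definition core_network (n : nat) (iota : 'I_n -> V) (o : V) : Prop :=
  (forall v : V, downstream v o) /\
  (forall v : V, exists m : 'I_n, downstream (iota m) v).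

(* a :: p is a simple path from a to b: consecutive nodes joined by edges,
   no node repeated, ending at b. *)
Definition simple_path (a b : V) (p : seq V) : bool :=
  [&& path e a p, uniq (a :: p) & last a p == b].

Definition absolutely_super_simple (n : nat) (iota : 'I_n -> V) (o v : V) : Prop :=
  forall (m : 'I_n) (p : seq V), simple_path (iota m) o p -> v \in iota m :: p.
End Network.

(* If a and b are distinct and b lies on every simple a–o path, cut a simple
   a–o path at b: the tail is a simple b–o path that avoids a.  So two
   distinct nodes cannot each lie on every simple path from the other to o;
   absolute super-simplicity of two input nodes is exactly this situation. *)
From mathcomp Require Import all_boot.

Set Implicit Arguments.
Unset Strict Implicit.
Unset Printing Implicit Defensive.

Section SimplePaths.
Variables (V : finType) (e : rel V).

Lemma simple_path_of_downstream (a b : V) :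
  downstream e a b -> exists p, simple_path e a b p.
Proof.
case/connectP=> p0 e_p0 ->; case: (shortenP e_p0) => p e_p uniq_p _.
by exists p; rewrite /simple_path e_p uniq_p eqxx.
Qed.

Lemma simple_path_suffix (a b x : V) (p : seq V) :
  simple_path e a b p -> x \in p ->
  exists2 q, simple_path e x b q & a \notin x :: q.
Proof.
case/and3P=> e_p uniq_p /eqP last_p x_in_p.
case/splitPr: x_in_p e_p uniq_p last_p => p1 p2.
rewrite cat_path -cat_cons cat_uniq last_cat.
move=> /andP[_ /andP[_ e_p2]] /and3P[_ /hasPn disjoint_p1 uniq_p2] last_p2.
exists p2; first by apply/and3P; split; last apply/eqP.
by apply/negP=> /disjoint_p1; rewrite mem_head.
Qed.

Lemma mutually_unavoidable_eq (a b o : V) :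
  downstream e a o ->
  (forall p, simple_path e a o p -> b \in a :: p) ->
  (forall q, simple_path e b o q -> a \in b :: q) ->
  a = b.
Proof.
move=> a_to_o b_on_a_paths a_on_b_paths.
have [p sp_p] := simple_path_of_downstream a_to_o.
case: (eqVneq b a) => [-> // | b_neq_a].
have : b \in p by move: (b_on_a_paths p sp_p); rewrite in_cons (negbTE b_neq_a).
case/(simple_path_suffix sp_p)=> q sp_q /negP[].
exact: a_on_b_paths.
Qed.

End SimplePaths.

Theorem corollary3p18 (V : finType) (e : rel V) (n : nat) (iota : 'I_n -> V) (o : V) :
  core_network e iota o ->
  forall j k : 'I_n,
    absolutely_super_simple e iota o (iota j) ->
    absolutely_super_simple e iota o (iota k) ->
    iota j = iota k.
Proof.
move=> [all_to_o _] j k ass_j ass_k.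
exact: mutually_unavoidable_eq (all_to_o (iota j)) (ass_k j) (ass_j k).
Qed.
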